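(* For $i\neq j$ let $a_{ij}=\frac{(n-1)(2-\omega_i-\omega_j)\eta}{n}$. For any constant $\varepsilon\in(0,\eta)$ let $c_\varepsilon=\min\{\max_{i\ne j}a_{ij}-2\varepsilon,1\}$. Then the set $E_{c_\varepsilon}=\{(x_1,\dots,x_n)\in[0,1]^n:\max_{i,j}|x_i-x_j|\ge c_\varepsilon\}$ is finite-time robustly reachable from $[0,1]^n$ under control protocol (C6).
   Context: Fix $n\ge3$, $\mathcal V=\{1,\dots,n\}$, confidence thresholds $r_i\in(0,1]$, belief factors $\omega_i\in(0,1)$, $\eta>0$. States $x(t)\in[0,1]^n$. Neighbor set $\mathcal N_i(t)=\{j:|x_j(t)-x_i(t)|\le r_i\}$ (contains $i$), $\Pi_{[0,1]}(y)=\min\{1,\max\{0,y\}\}$, $x_{\rm ave}(t)=\frac1n\sum_ix_i(t)$. Control protocol (C6): $x_i(t+1)=\Pi_{[0,1]}\big(\omega_ix_{\rm ave}(t)+\frac{1-\omega_i}{|\mathcal N_i(t)|}[x_i(t)+\sum_{j\in\mathcal N_i(t)\setminus\{i\}}(x_j(t)+u_{ji}(t)+b_{ji}(t))]\big)$, where for $j\in\mathcal N_i(t)\setminus\{i\}$: $\delta_i(t)\in(0,\eta)$ is a chosen parameter, $u_{ji}(t)\in[-\eta+\delta_i(t),\eta-\delta_i(t)]$ a chosen control input, $b_{ji}(t)\in[-\delta_i(t),\delta_i(t)]$ an arbitrary uncertainty; the choices may depend on $x(0),\dots,x(t)$. A set $S\subseteq[0,1]^n$ is finite-time robustly reachable from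 $[0,1]^n$ under the protocol if there exist constants $T>0$ and $\varepsilon'\in(0,\eta)$ such that for every $x(0)\in[0,1]^n$, either $x(0)\in S$, or one can choose $\delta_i(t)\in[\varepsilon',\eta)$ and $u_{ji}(t)\in[-\eta+\delta_i(t),\eta-\delta_i(t)]$ ($0\le t<T$, $i\in\mathcal V$, $j\in\mathcal N_i(t)\setminus\{i\}$) guaranteeing that for arbitrary $b_{ji}(t)\in[-\delta_i(t),\delta_i(t)]$ there is $t\in[1,T]$ with $x(t)\in S$. *)

From Stdlib Require Import Reals Lra List.
Import ListNotations.
From Stdlib Require Import Bool.
Open Scope R_scope.

(* Agents are indexed by 0..n-1; a state is a function nat -> R
   (only the values at indices < n matter). *)
Definition state := nat -> R.

Definition idx (n : nat) : list nat := seq 0 n.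

Definition rsum (l : list nat) (f : nat -> R) : R :=
  fold_right (fun j acc => f j + acc) 0 l.

Definition proj01 (y : R) : R := Rmin 1 (Rmax 0 y).

Definition in_box (n : nat) (x : state) : Prop :=
  forall i, (i < n)%nat -> 0 <= x i <= 1.

Definition x_ave (n : nat) (x : state) : R := rsum (idx n) x / INR n.

Definition nbb (r : nat -> R) (x : state) (i j : nat) : bool :=
  if Rle_dec (Rabs (x j - x i)) (r i) then true else false.

Definition nbrs_other (n : nat) (r : nat -> R) (x : state) (i : nat) : list nat :=
  filter (fun j => andb (negb (Nat.eqb j i)) (nbb r x i j)) (idx n).

(* |N_i(x)| (N_i contains i) *)
Definition card_N (n : nat) (r : nat -> R) (x : state) (i : nat) : R :=
  INR (S (length (nbrs_other n r x i))).

(* One step of protocol (C6). d i = delta_i(t), uu j i = u_ji(t), bb j i = b_ji(t). *)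
Definition step (n : nat) (r w : nat -> R) (x : state)
    (uu bb : nat -> nat -> R) : state :=
  fun i => proj01 (w i * x_ave n x
     + (1 - w i) / card_N n r x i
       * (x i + rsum (nbrs_other n r x i) (fun j => x j + uu j i + bb j i))).

(* Controller strategies: delta h i and u h j i depend on the history
   h = [x(t); x(t-1); ...; x(0)] (most recent first).
   Disturbance b t j i = b_ji(t). *)
Definition history := list state.

Definition cur (h : history) : state := hd (fun _ => 0) h.

Fixpoint hist (n : nat) (r w : nat -> R)
    (u : history -> nat -> nat -> R) (b : nat -> nat -> nat -> R)
    (x0 : state) (t : nat) : history :=
  match t with
  | O => [x0]
  | S t' => let h := hist n r w u b x0 t' in
            step n r w (cur h) (u h) (b t') :: h
  end.

Definition traj n r w u b x0 (t : nat) : state := cur (hist n r w u b x0 t).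

Definition robustly_reachable (n : nat) (r w : nat -> R) (eta : R)
    (S : state -> Prop) : Prop :=
  exists (T : nat) (eps' : R),
    (0 < T)%nat /\ 0 < eps' < eta /\
    forall x0 : state, in_box n x0 ->
      S x0 \/
      exists (delta : history -> nat -> R) (u : history -> nat -> nat -> R),
        (forall h i, (i < n)%nat -> eps' <= delta h i < eta) /\
        (forall h i j, (i < n)%nat -> (j < n)%nat ->
            - eta + delta h i <= u h j i <= eta - delta h i) /\
        forall b : nat -> nat -> nat -> R,
          (forall t i j, (t < T)%nat -> (i < n)%nat -> (j < n)%nat -> j <> i ->
             nbb r (traj n r w u b x0 t) i j = true ->
             let d := delta (hist n r w u b x0 t) i in
             - d <= b t j i <= d) ->
          exists t, (1 <= t <= T)%nat /\ S (traj n r w u b x0 t).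

(* maximum of a list of reals (all values here are >= 0, resp. > 0,
   so the initial value 0 does not affect the maximum) *)
Definition rmax_list (l : list R) : R := fold_right Rmax 0 l.

Definition a_coef (n : nat) (w : nat -> R) (eta : R) (i j : nat) : R :=
  (INR n - 1) * (2 - w i - w j) * eta / INR n.

Definition max_a (n : nat) (w : nat -> R) (eta : R) : R :=
  rmax_list (flat_map (fun i => map (fun j => a_coef n w eta i j)
                         (filter (fun j => negb (Nat.eqb i j)) (idx n))) (idx n)).

Definition c_eps (n : nat) (w : nat -> R) (eta eps : R) : R :=
  Rmin (max_a n w eta - 2 * eps) 1.

Definition max_diff (n : nat) (x : state) : R :=
  rmax_list (flat_map (fun i => map (fun j => Rabs (x i - x j)) (idx n)) (idx n)).

Definition E_set (n : nat) (c : R) (x : state) : Prop :=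
  in_box n x /\ max_diff n x >= c.

From Stdlib Require Import Reals Lra Lia List.
Open Scope R_scope.

(* The controller works with every disturbance bounded by a fixed small [d]. Away from
   clusters it applies no control: the term [w i * x_ave] contracts the spread by the
   factor [1 - min w] up to [2 d], so after boundedly many steps all agents lie within the
   smallest confidence radius. From then on every agent sees every other one, and agent
   [i] moves to [x_ave + gain i * u_i] up to [gain i * d], with
   [gain i = (1 - w i) (n - 1) / n]. Shifting all agents by [2 d] keeps them clustered and
   brings the average into a band within [1 / d] steps; from the band, the controls
   [eta - d] and [-(eta - d)] on a pair maximising [a_ij = (gain i + gain j) eta] separate
   the two agents by at least [c_eps], even after projection onto [0, 1]. *)

Lemma rsum_plus l f g : rsum l (fun j => f j + g j) = rsum l f + rsum l g.
Proof. induction l; simpl; lra. Qed.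

Lemma rsum_const l c : rsum l (fun _ => c) = INR (length l) * c.
Proof.
  induction l as [|a l IH]; unfold rsum in *; cbn [fold_right length]; [simpl; lra|].
  rewrite IH, S_INR. lra.
Qed.

Lemma rsum_bounds l f lo hi : (forall j, In j l -> lo <= f j <= hi) ->
  INR (length l) * lo <= rsum l f <= INR (length l) * hi.
Proof.
  induction l as [|a l IH]; intros Hf; unfold rsum in *; cbn [fold_right length]; [simpl; lra|].
  rewrite S_INR. destruct (Hf a (or_introl eq_refl)).
  destruct IH as [G1 G2]; [intros; apply Hf; simpl; auto|]. lra.
Qed.

Lemma rsum_remove l f i : NoDup l -> In i l ->
  rsum l f = f i + rsum (filter (fun j => negb (Nat.eqb j i)) l) f.
Proof.
  induction l as [|a l IH]; simpl; intros Hnd Hi; [contradiction|].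
  inversion Hnd as [|? ? Ha Hnd']; subst.
  destruct (Nat.eqb_spec a i) as [->|Hai]; simpl.
  - rewrite forallb_filter_id; [reflexivity|]. apply forallb_forall.
    intros j Hj. destruct (Nat.eqb_spec j i); [subst; contradiction|reflexivity].
  - destruct Hi as [Hi|Hi]; [congruence|]. unfold rsum in *; simpl.
    rewrite (IH Hnd' Hi). lra.
Qed.

Lemma mean_bounds a l f lo hi : lo <= a <= hi -> (forall j, In j l -> lo <= f j <= hi) ->
  lo <= (a + rsum l f) / INR (S (length l)) <= hi.
Proof.
  intros Ha Hf. pose proof (rsum_bounds l f lo hi Hf). pose proof (pos_INR (length l)).
  rewrite S_INR. split; [apply Rmult_le_reg_r with (INR (length l) + 1)|
    apply Rmult_le_reg_r with (INR (length l) + 1)]; try lra;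
  unfold Rdiv; rewrite Rmult_assoc, Rinv_l by lra; lra.
Qed.

Lemma x_ave_bounds n x lo hi : (0 < n)%nat -> (forall k, (k < n)%nat -> lo <= x k <= hi) ->
  lo <= x_ave n x <= hi.
Proof.
  intros Hn H. unfold x_ave.
  assert (Hl : forall j, In j (idx n) -> lo <= x j <= hi).
  { intros j Hj. apply H. apply in_seq in Hj. lia. }
  pose proof (rsum_bounds _ _ _ _ Hl) as B.
  replace (length (idx n)) with n in B by (symmetry; apply length_seq).
  assert (0 < INR n) by (apply lt_0_INR; lia).
  split; [apply Rmult_le_reg_r with (INR n)|apply Rmult_le_reg_r with (INR n)]; auto;
  unfold Rdiv; rewrite Rmult_assoc, Rinv_l by lra; lra.
Qed.

Lemma rmax_list_ge0 l : 0 <= rmax_list l.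
Proof. induction l; simpl; [lra|]. eapply Rle_trans; [apply IHl|apply Rmax_r]. Qed.

Lemma rmax_list_ge l a : In a l -> a <= rmax_list l.
Proof.
  induction l as [|b l IH]; simpl; intros H; [contradiction|].
  destruct H as [->|H]; [apply Rmax_l|].
  eapply Rle_trans; [apply IH; auto|apply Rmax_r].
Qed.

Lemma rmax_list_lub l B : 0 <= B -> (forall a, In a l -> a <= B) -> rmax_list l <= B.
Proof. induction l; simpl; intros H0 H; auto. apply Rmax_lub; auto. Qed.

Lemma rmax_list_attained l : rmax_list l = 0 \/ In (rmax_list l) l.
Proof.
  induction l as [|a l IH]; simpl; [auto|]. unfold Rmax. destruct Rle_dec.
  - destruct IH; auto.
  - auto.
Qed.

Definition min_over (n : nat) (f : nat -> R) : R := fold_right Rmin 1 (map f (seq 0 n)).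

Lemma min_over_le n f i : (i < n)%nat -> min_over n f <= f i.
Proof.
  intros Hi. assert (Hin : In (f i) (map f (seq 0 n))) by (apply in_map, in_seq; lia).
  unfold min_over. induction (map f (seq 0 n)) as [|a l IH]; simpl in *; [contradiction|].
  destruct Hin as [->|Hin]; [apply Rmin_l|eapply Rle_trans; [apply Rmin_r|auto]].
Qed.

Lemma min_over_pos n f : (forall i, (i < n)%nat -> 0 < f i) -> 0 < min_over n f.
Proof.
  intros H. assert (Hl : forall a, In a (map f (seq 0 n)) -> 0 < a).
  { intros a Ha. apply in_map_iff in Ha as [i [<- Hi]]. apply in_seq in Hi. apply H. lia. }
  unfold min_over. induction (map f (seq 0 n)) as [|a l IH]; simpl; [lra|].
  apply Rmin_glb_lt; [apply Hl; left; reflexivity|].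
  apply IH. intros b Hb. apply Hl. right. exact Hb.
Qed.

Lemma min_over_attained n f : min_over n f = 1 \/ exists i, (i < n)%nat /\ min_over n f = f i.
Proof.
  assert (H : forall l, fold_right Rmin 1 l = 1 \/ In (fold_right Rmin 1 l) l).
  { induction l as [|a l IH]; simpl; [auto|].
    destruct (Rle_dec a (fold_right Rmin 1 l)).
    - rewrite Rmin_left by lra. right; left; reflexivity.
    - rewrite Rmin_right by lra. destruct IH; [left|right; right]; auto. }
  destruct (H (map f (seq 0 n))) as [E|E]; [left; exact E|right].
  apply in_map_iff in E as [i [Ei Hi]]. apply in_seq in Hi.
  exists i. split; [lia|symmetry; exact Ei].
Qed.

Lemma max_diff_ge n x i j : (i < n)%nat -> (j < n)%nat -> Rabs (x i - x j) <= max_diff n x.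
Proof.
  intros Hi Hj. apply rmax_list_ge, in_flat_map. exists i. split; [apply in_seq; lia|].
  apply (in_map (fun j => Rabs (x i - x j))), in_seq. lia.
Qed.

Lemma max_diff_lub n x B : 0 <= B ->
  (forall i j, (i < n)%nat -> (j < n)%nat -> Rabs (x i - x j) <= B) -> max_diff n x <= B.
Proof.
  intros H0 H. apply rmax_list_lub; auto. intros a Ha. apply in_flat_map in Ha as [i [Hi Ha]].
  apply in_map_iff in Ha as [j [<- Hj]]. apply in_seq in Hi, Hj. apply H; lia.
Qed.

Lemma max_diff_band n x lo hi : lo <= hi -> (forall k, (k < n)%nat -> lo <= x k <= hi) ->
  max_diff n x <= hi - lo.
Proof.
  intros Hlh H. apply max_diff_lub; [lra|]. intros i j Hi Hj.
  destruct (H i Hi), (H j Hj). apply Rabs_le. lra.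
Qed.

Lemma max_diff_spread n x : (0 < n)%nat -> in_box n x ->
  exists m, forall k, (k < n)%nat -> m <= x k <= m + max_diff n x.
Proof.
  intros Hn Hx. exists (min_over n x). intros k Hk. split; [apply min_over_le; auto|].
  pose proof (rmax_list_ge0 (flat_map (fun i => map (fun j => Rabs (x i - x j)) (idx n)) (idx n))).
  destruct (min_over_attained n x) as [E|[k0 [Hk0 E]]]; rewrite E.
  - destruct (Hx k Hk). fold (max_diff n x) in *. lra.
  - pose proof (max_diff_ge n x k k0 Hk Hk0). pose proof (Rle_abs (x k - x k0)). lra.
Qed.

Lemma proj01_range y : 0 <= proj01 y <= 1.
Proof. unfold proj01, Rmin, Rmax; repeat destruct Rle_dec; lra. Qed.

Lemma proj01_id y : 0 <= y <= 1 -> proj01 y = y.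
Proof. unfold proj01, Rmin, Rmax; repeat destruct Rle_dec; lra. Qed.

Lemma proj01_le a b : a <= b -> proj01 a <= proj01 b.
Proof. unfold proj01, Rmin, Rmax; repeat destruct Rle_dec; lra. Qed.

Lemma proj01_lipschitz a b : Rabs (proj01 a - proj01 b) <= Rabs (a - b).
Proof.
  unfold proj01, Rmin, Rmax, Rabs; repeat destruct Rle_dec; repeat destruct Rcase_abs; lra.
Qed.

Lemma proj01_gap A P Q c : 0 <= A <= 1 -> c - P <= A <= 1 + Q - c ->
  0 <= P -> 0 <= Q -> c <= P + Q -> c <= 1 -> c <= proj01 (A + P) - proj01 (A - Q).
Proof. intros. unfold proj01, Rmin, Rmax; repeat destruct Rle_dec; lra. Qed.

Lemma step_in_box n r w x uu bb : in_box n (step n r w x uu bb).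
Proof. intros i _. apply proj01_range. Qed.

Lemma max_diff_box n x : in_box n x -> max_diff n x <= 1.
Proof.
  intros Hx. apply max_diff_lub; [lra|]. intros i j Hi Hj.
  destruct (Hx i Hi), (Hx j Hj). apply Rabs_le. lra.
Qed.

Definition noise_bounded (n : nat) (r : nat -> R) (x : state) (bb : nat -> nat -> R) (d : R) :=
  forall i j, (i < n)%nat -> (j < n)%nat -> j <> i -> nbb r x i j = true -> - d <= bb j i <= d.

Lemma in_nbrs_other n r x i j : In j (nbrs_other n r x i) ->
  (j < n)%nat /\ j <> i /\ nbb r x i j = true.
Proof.
  unfold nbrs_other. intros Hj. apply filter_In in Hj as [Hj Hc].
  apply andb_prop in Hc as [Hc1 Hc2]. apply in_seq in Hj.
  apply Bool.negb_true_iff, Nat.eqb_neq in Hc1. repeat split; auto; lia.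
Qed.

Lemma weighted_means_gap wi wk wm A Mi Mk m D d :
  0 <= wm <= wi -> wi < 1 -> wm <= wk -> wk < 1 -> m <= A <= m + D ->
  Mi <= m + D + d -> m - d <= Mk -> 0 <= d ->
  wi * A + (1 - wi) * Mi - (wk * A + (1 - wk) * Mk) <= (1 - wm) * D + 2 * d.
Proof. intros. destruct (Rle_dec wk wi); nra. Qed.

Lemma step_spread_contract n r w x uu bb wm d :
  (0 < n)%nat -> in_box n x -> 0 <= wm -> (forall i, (i < n)%nat -> wm <= w i < 1) ->
  0 <= d -> (forall j i, uu j i = 0) -> noise_bounded n r x bb d ->
  max_diff n (step n r w x uu bb) <= (1 - wm) * max_diff n x + 2 * d.
Proof.
  intros Hn Hx Hwm Hw Hd Hu Hbb.
  destruct (max_diff_spread n x Hn Hx) as [m Hm].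
  set (D := max_diff n x) in *.
  assert (HD : 0 <= D) by apply rmax_list_ge0.
  assert (HA : m <= x_ave n x <= m + D) by (apply x_ave_bounds; auto).
  assert (Hmean : forall i, (i < n)%nat -> exists M, m - d <= M <= m + D + d /\
     step n r w x uu bb i = proj01 (w i * x_ave n x + (1 - w i) * M)).
  { intros i Hi.
    exists ((x i + rsum (nbrs_other n r x i) (fun j => x j + uu j i + bb j i))
            / INR (S (length (nbrs_other n r x i)))).
    split; [|unfold step, card_N; f_equal; unfold Rdiv; ring].
    apply mean_bounds; [specialize (Hm i Hi); lra|].
    intros j Hj. destruct (in_nbrs_other n r x i j Hj) as [Hjn [Hji Hnb]].
    rewrite Hu. specialize (Hm j Hjn). specialize (Hbb i j Hi Hjn Hji Hnb). lra. }
  destruct (Hw 0%nat Hn).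
  apply max_diff_lub; [nra|]. intros i k Hi Hk.
  destruct (Hmean i Hi) as [Mi [HMi ->]], (Hmean k Hk) as [Mk [HMk ->]].
  destruct (Hw i Hi), (Hw k Hk).
  eapply Rle_trans; [apply proj01_lipschitz|]. apply Rabs_le. split.
  - assert (w k * x_ave n x + (1 - w k) * Mk - (w i * x_ave n x + (1 - w i) * Mi)
            <= (1 - wm) * D + 2 * d) by (apply (weighted_means_gap _ _ _ _ _ _ m); lra).
    lra.
  - apply (weighted_means_gap _ _ _ _ _ _ m); lra.
Qed.

Definition gain (n : nat) (w : nat -> R) (i : nat) : R := (1 - w i) * (INR n - 1) / INR n.

Lemma gain_bounds n w i : (2 <= n)%nat -> 0 < w i < 1 -> 0 < gain n w i <= 1.
Proof.
  intros Hn Hw. unfold gain. assert (2 <= INR n) by (apply (le_INR 2); lia).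
  split; [apply Rdiv_lt_0_compat; nra|].
  apply Rmult_le_reg_r with (INR n); [lra|]. unfold Rdiv. rewrite Rmult_assoc, Rinv_l by lra. nra.
Qed.

Lemma a_coef_gain n w eta i j : (0 < n)%nat -> a_coef n w eta i j = (gain n w i + gain n w j) * eta.
Proof. intros. unfold a_coef, gain. assert (0 < INR n) by (apply lt_0_INR; lia). field. lra. Qed.

Lemma max_a_attained n w eta : (2 <= n)%nat -> (forall i, (i < n)%nat -> 0 < w i < 1) ->
  0 < eta -> exists i j, (i < n)%nat /\ (j < n)%nat /\ i <> j /\ max_a n w eta <= a_coef n w eta i j.
Proof.
  intros Hn Hw He.
  destruct (rmax_list_attained (flat_map (fun i => map (fun j => a_coef n w eta i j)
    (filter (fun j => negb (Nat.eqb i j)) (idx n))) (idx n))) as [E|E]; fold (max_a n w eta) in E.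
  - exists 0%nat, 1%nat. repeat split; try lia. rewrite E, a_coef_gain by lia.
    destruct (gain_bounds n w 0 Hn (Hw 0%nat ltac:(lia))), (gain_bounds n w 1 Hn (Hw 1%nat ltac:(lia))).
    nra.
  - apply in_flat_map in E as [i [Hi E]]. apply in_map_iff in E as [j [Ej E]].
    apply filter_In in E as [Hj Hij]. apply in_seq in Hi, Hj.
    apply Bool.negb_true_iff, Nat.eqb_neq in Hij.
    exists i, j. repeat split; auto; try lia. rewrite Ej. lra.
Qed.

Lemma nbrs_other_clustered n r x i : (i < n)%nat -> max_diff n x <= r i ->
  nbrs_other n r x i = filter (fun j => negb (Nat.eqb j i)) (idx n).
Proof.
  intros Hi Hc. unfold nbrs_other. apply filter_ext_in. intros j Hj. apply in_seq in Hj.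
  replace (nbb r x i j) with true; [apply Bool.andb_true_r|].
  unfold nbb. destruct Rle_dec as [|Hn]; [reflexivity|]. exfalso; apply Hn.
  pose proof (max_diff_ge n x j i ltac:(lia) Hi). lra.
Qed.

(* In a cluster the neighbour set of [i] is everybody, so the neighbour mean is the
   global mean. *)
Lemma step_clustered n r w x s bb d i :
  (i < n)%nat -> 0 < w i < 1 -> max_diff n x <= r i -> 0 <= d -> noise_bounded n r x bb d ->
  exists y, step n r w x (fun _ k => s k) bb i = proj01 y /\
    x_ave n x + gain n w i * s i - gain n w i * d <= y <=
    x_ave n x + gain n w i * s i + gain n w i * d.
Proof.
  intros Hi Hw Hc Hd Hbb.
  set (l := filter (fun j => negb (Nat.eqb j i)) (idx n)).
  assert (Hl : nbrs_other n r x i = l) by (apply nbrs_other_clustered; auto).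
  assert (Hnd : NoDup (idx n)) by apply seq_NoDup.
  assert (Hin : In i (idx n)) by (apply in_seq; lia).
  assert (Hsum : rsum (idx n) x = x i + rsum l x) by (apply rsum_remove; auto).
  assert (Hlen : INR (length l) = INR n - 1).
  { pose proof (rsum_remove _ (fun _ => 1) _ Hnd Hin) as E. fold l in E.
    rewrite !rsum_const in E. unfold idx in E. rewrite length_seq in E. lra. }
  assert (HN : 0 < INR n) by (apply lt_0_INR; lia).
  set (B := rsum l (fun j => bb j i)).
  assert (HB : (INR n - 1) * (- d) <= B <= (INR n - 1) * d).
  { rewrite <- Hlen. apply rsum_bounds. intros j Hj. rewrite <- Hl in Hj.
    destruct (in_nbrs_other n r x i j Hj) as [? [? ?]]. apply Hbb; auto. }
  exists (x_ave n x + gain n w i * s i + (1 - w i) / INR n * B). split.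
  { unfold step, card_N, x_ave, gain, B. f_equal.
    rewrite Hl, !rsum_plus, rsum_const, S_INR, Hlen, Hsum. field. lra. }
  unfold gain.
  assert (0 <= (1 - w i) / INR n) by (apply Rlt_le, Rdiv_lt_0_compat; lra).
  replace ((1 - w i) * (INR n - 1) / INR n) with ((1 - w i) / INR n * (INR n - 1)) by (field; lra).
  split; nra.
Qed.

Lemma contraction_reaches_level (D : nat -> R) (q e rho : R) (K : nat) :
  0 <= q < 1 -> 0 <= e -> D 0%nat <= 1 -> q ^ K < rho / 2 -> e / (1 - q) <= rho / 2 ->
  (forall t, (t < K)%nat -> rho < D t -> D (S t) <= q * D t + e) ->
  exists t, (t <= K)%nat /\ D t <= rho.
Proof.
  intros Hq He H0 HK Her Hstep.
  assert (He' : 0 <= e / (1 - q)) by (apply Rmult_le_pos; [lra|apply Rlt_le, Rinv_0_lt_compat; lra]).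
  assert (Hinv : forall t, (t <= K)%nat ->
    (exists t', (t' <= t)%nat /\ D t' <= rho) \/ D t <= q ^ t + e / (1 - q)).
  { induction t as [|t IH]; intros Ht; [right; simpl; lra|].
    destruct (IH ltac:(lia)) as [[t' [Ht' Hr]]|Hb]; [left; exists t'; split; [lia|auto]|].
    destruct (Rle_lt_dec (D t) rho) as [Hr|Hr]; [left; exists t; split; [lia|auto]|].
    right. specialize (Hstep t ltac:(lia) Hr).
    assert (q * D t <= q * (q ^ t + e / (1 - q))) by (apply Rmult_le_compat_l; lra).
    replace (q ^ S t + e / (1 - q)) with (q * (q ^ t + e / (1 - q)) + e) by (simpl; field; lra).
    lra. }
  destruct (Hinv K (le_n K)) as [[t [Ht Hr]]|Hb]; [exists t; auto|exists K; split; [lia|lra]].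
Qed.

(* [lo + 3 d <= hi] rules out overshooting the band in one step, and each step
   outside the band shrinks the distance to it by [d]. *)
Lemma steered_into_band (C : nat -> Prop) (a : nat -> R) (lo hi d : R) (M : nat) :
  0 < d -> 1 < INR M * d -> lo + 3 * d <= hi -> lo <= 1 -> 0 <= hi ->
  (forall k, 0 <= a k <= 1) -> C 0%nat ->
  (forall k, (k < M)%nat -> C k -> a k < lo -> C (S k) /\ a k + d <= a (S k) <= a k + 3 * d) ->
  (forall k, (k < M)%nat -> C k -> hi < a k -> C (S k) /\ a k - 3 * d <= a (S k) <= a k - d) ->
  exists k, (k <= M)%nat /\ C k /\ lo <= a k <= hi.
Proof.
  intros Hd HM Hband Hlo Hhi Ha HC0 Hup Hdown.
  assert (Hinv : forall k, (k <= M)%nat ->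
    (exists k', (k' <= k)%nat /\ C k' /\ lo <= a k' <= hi) \/
    (C k /\ (a k < lo -> lo - a k <= 1 - INR k * d) /\ (hi < a k -> a k - hi <= 1 - INR k * d))).
  { induction k as [|k IH]; intros Hk.
    - right. simpl. specialize (Ha 0%nat). repeat split; auto; lra.
    - destruct (IH ltac:(lia)) as [[k' [Hk' Hin]]|[HC [Hbelow Habove]]];
        [left; exists k'; split; [lia|auto]|].
      rewrite S_INR.
      destruct (Rlt_dec (a k) lo) as [Hl|Hl]; [|destruct (Rlt_dec hi (a k)) as [Hh|Hh]].
      + destruct (Hup k ltac:(lia) HC Hl) as [HC' Hak].
        destruct (Rle_dec lo (a (S k))); [left; exists (S k); repeat split; auto; lra|].
        right. specialize (Hbelow Hl). repeat split; auto; intros; lra.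
      + destruct (Hdown k ltac:(lia) HC Hh) as [HC' Hak].
        destruct (Rle_dec (a (S k)) hi); [left; exists (S k); repeat split; auto; lra|].
        right. specialize (Habove Hh). repeat split; auto; intros; lra.
      + left. exists k. repeat split; auto; lra. }
  destruct (Hinv M (le_n M)) as [[k [Hk Hin]]|[HC [Hbelow Habove]]]; [exists k; auto|].
  exists M. repeat split; auto.
  - destruct (Rle_dec lo (a M)) as [|Hl]; [auto|]. specialize (Hbelow ltac:(lra)). lra.
  - destruct (Rle_dec (a M) hi) as [|Hh]; [auto|]. specialize (Habove ltac:(lra)). lra.
Qed.

Section Steering.

Variables (n : nat) (r w : nat -> R) (eta c d rho wm gm : R) (i0 j0 : nat).

Hypothesis Hn : (2 <= n)%nat.
Hypothesis Hw : forall i, (i < n)%nat -> wm <= w i < 1.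
Hypothesis Hwm : 0 < wm.
Hypothesis Hrho : forall i, (i < n)%nat -> rho <= r i.
Hypothesis Hgm : forall i, (i < n)%nat -> gm <= gain n w i.
Hypothesis Hi0 : (i0 < n)%nat.
Hypothesis Hj0 : (j0 < n)%nat.
Hypothesis Hij : i0 <> j0.
Hypothesis Heta : 0 < eta.
Hypothesis Hd : 0 < d.
Hypothesis Hd_gm : 6 * d <= gm * eta.
Hypothesis Hd_wm : 4 * d <= wm * rho.
Hypothesis Hc1 : c <= 1.
Hypothesis Hc_a : c + 8 * d <= a_coef n w eta i0 j0.

Let Hn0 : (0 < n)%nat. Proof. lia. Qed.

Let Hw01 i : (i < n)%nat -> 0 < w i < 1.
Proof. intros Hi. destruct (Hw i Hi). lra. Qed.

Let Hgain i : (i < n)%nat -> 0 < gain n w i <= 1.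
Proof. intros Hi. apply gain_bounds; auto. Qed.

Let Hwm1 : wm < 1.
Proof. destruct (Hw 0%nat Hn0). lra. Qed.

Let Hgm1 : gm <= 1.
Proof. pose proof (Hgm 0%nat Hn0). destruct (Hgain 0%nat Hn0). lra. Qed.

Let Hd_rho : 4 * d <= rho.
Proof. assert (0 < rho) by nra. nra. Qed.

Let Hd_eta : 6 * d <= eta.
Proof. nra. Qed.

Let P := gain n w i0 * (eta - 2 * d).
Let Q := gain n w j0 * (eta - 2 * d).

(* [P] and [Q] are the worst-case displacements of [i0] and [j0] under the controls
   [eta - d] and [-(eta - d)]; the control [2 * d / gain n w i] shifts every agent by
   [2 * d] up to noise. *)
Definition ctrl (x : state) (i : nat) : R :=
  if Rle_dec (max_diff n x) rho then
    if Rlt_dec (x_ave n x) (c - P) then 2 * d / gain n w i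
    else if Rlt_dec (1 + Q - c) (x_ave n x) then - (2 * d / gain n w i)
    else if Nat.eqb i i0 then eta - d else if Nat.eqb i j0 then - (eta - d) else 0
  else 0.

Definition ctrl_step (x : state) (bb : nat -> nat -> R) : state :=
  step n r w x (fun _ i => ctrl x i) bb.

Lemma ctrl_bounded x i : (i < n)%nat -> - (eta - d) <= ctrl x i <= eta - d.
Proof.
  intros Hi. destruct (Hgain i Hi). pose proof (Hgm i Hi).
  assert (Hs : 0 <= 2 * d / gain n w i <= eta - d).
  { split; [apply Rlt_le, Rdiv_lt_0_compat; lra|].
    apply Rmult_le_reg_r with (gain n w i); [lra|].
    unfold Rdiv. rewrite Rmult_assoc, Rinv_l by lra. nra. }
  unfold ctrl. destruct Rle_dec; [|lra]. destruct Rlt_dec; [lra|].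
  destruct Rlt_dec; [lra|]. destruct (Nat.eqb i i0); [lra|]. destruct (Nat.eqb i j0); lra.
Qed.

Let HP : 3 * d <= P.
Proof. unfold P. pose proof (Hgm i0 Hi0). nra. Qed.

Let HQ : 3 * d <= Q.
Proof. unfold Q. pose proof (Hgm j0 Hj0). nra. Qed.

Let HPQ : c + 3 * d <= P + Q.
Proof.
  unfold P, Q. rewrite a_coef_gain in Hc_a by exact Hn0.
  destruct (Hgain i0 Hi0), (Hgain j0 Hj0). nra.
Qed.

Section Step.

Variables (x : state) (bb : nat -> nat -> R).
Hypothesis Hx : in_box n x.
Hypothesis Hbb : noise_bounded n r x bb d.

Let HA : 0 <= x_ave n x <= 1.
Proof. apply x_ave_bounds; auto. Qed.

Lemma ctrl_step_spread : rho < max_diff n x ->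
  max_diff n (ctrl_step x bb) <= (1 - wm) * max_diff n x + 2 * d.
Proof.
  intros Hc. apply step_spread_contract; auto; try lra.
  intros j i. unfold ctrl. destruct Rle_dec; [lra|reflexivity].
Qed.

Lemma ctrl_step_clustered i : (i < n)%nat -> max_diff n x <= rho ->
  exists y, ctrl_step x bb i = proj01 y /\
    x_ave n x + gain n w i * ctrl x i - gain n w i * d <= y <=
    x_ave n x + gain n w i * ctrl x i + gain n w i * d.
Proof.
  intros Hi Hc. apply step_clustered; auto; [pose proof (Hrho i Hi)|]; lra.
Qed.

Lemma ctrl_step_shift sg : max_diff n x <= rho ->
  (forall i, (i < n)%nat -> gain n w i * ctrl x i = sg) ->
  0 <= x_ave n x + sg - d -> x_ave n x + sg + d <= 1 ->
  max_diff n (ctrl_step x bb) <= rho /\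
  x_ave n x + sg - d <= x_ave n (ctrl_step x bb) <= x_ave n x + sg + d.
Proof.
  intros Hc Hsg Hlo Hhi.
  assert (Hx' : forall i, (i < n)%nat ->
    x_ave n x + sg - d <= ctrl_step x bb i <= x_ave n x + sg + d).
  { intros i Hi. destruct (ctrl_step_clustered i Hi Hc) as [y [-> Hy]].
    rewrite Hsg in Hy by exact Hi. destruct (Hgain i Hi).
    assert (gain n w i * d <= d) by nra. rewrite proj01_id; lra. }
  split; [|apply x_ave_bounds; auto].
  pose proof (max_diff_band n (ctrl_step x bb) (x_ave n x + sg - d) (x_ave n x + sg + d) ltac:(lra) Hx'). lra.
Qed.

Lemma ctrl_step_up : max_diff n x <= rho -> x_ave n x < c - P ->
  max_diff n (ctrl_step x bb) <= rho /\
  x_ave n x + d <= x_ave n (ctrl_step x bb) <= x_ave n x + 3 * d.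
Proof.
  intros Hc HA'.
  destruct (ctrl_step_shift (2 * d)) as [Hc' HA'']; auto; try lra.
  intros i Hi. unfold ctrl. destruct Rle_dec; [|lra]. destruct Rlt_dec; [|lra].
  destruct (Hgain i Hi). field. lra.
Qed.

Lemma ctrl_step_down : max_diff n x <= rho -> 1 + Q - c < x_ave n x ->
  max_diff n (ctrl_step x bb) <= rho /\
  x_ave n x - 3 * d <= x_ave n (ctrl_step x bb) <= x_ave n x - d.
Proof.
  intros Hc HA'.
  destruct (ctrl_step_shift (- (2 * d))) as [Hc' HA'']; auto; try lra.
  intros i Hi. unfold ctrl. destruct Rle_dec; [|lra]. destruct Rlt_dec; [lra|].
  destruct Rlt_dec; [|lra]. destruct (Hgain i Hi). field. lra.
Qed.

Lemma ctrl_step_split : max_diff n x <= rho -> c - P <= x_ave n x <= 1 + Q - c ->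
  E_set n c (ctrl_step x bb).
Proof.
  intros Hc HA'. split; [apply step_in_box|apply Rle_ge].
  destruct (ctrl_step_clustered i0 Hi0 Hc) as [y1 [E1 Hy1]].
  destruct (ctrl_step_clustered j0 Hj0 Hc) as [y2 [E2 Hy2]].
  assert (C1 : ctrl x i0 = eta - d).
  { unfold ctrl. destruct Rle_dec; [|lra]. do 2 (destruct Rlt_dec; [lra|]).
    rewrite Nat.eqb_refl. reflexivity. }
  assert (C2 : ctrl x j0 = - (eta - d)).
  { unfold ctrl. destruct Rle_dec; [|lra]. do 2 (destruct Rlt_dec; [lra|]).
    destruct (Nat.eqb_spec j0 i0); [congruence|]. rewrite Nat.eqb_refl. reflexivity. }
  rewrite C1 in Hy1. rewrite C2 in Hy2.
  eapply Rle_trans; [|apply (max_diff_ge n _ i0 j0 Hi0 Hj0)].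
  eapply Rle_trans; [|apply Rle_abs]. rewrite E1, E2.
  assert (proj01 (x_ave n x + P) <= proj01 y1) by (apply proj01_le; unfold P; lra).
  assert (proj01 y2 <= proj01 (x_ave n x - Q)) by (apply proj01_le; unfold Q; lra).
  assert (c <= proj01 (x_ave n x + P) - proj01 (x_ave n x - Q)) by (apply proj01_gap; lra).
  lra.
Qed.

End Step.

Lemma ctrl_reaches (K M : nat) (x0 : state) (b : nat -> nat -> nat -> R) :
  (1 - wm) ^ K < rho / 2 -> 1 < INR M * d -> in_box n x0 ->
  let X := traj n r w (fun h _ i => ctrl (cur h) i) b x0 in
  (forall t, (t < K + M + 1)%nat -> noise_bounded n r (X t) (b t) d) ->
  exists t, (1 <= t <= K + M + 1)%nat /\ E_set n c (X t).
Proof.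
  intros HK HM Hx0 X Hb.
  assert (XS : forall t, X (S t) = ctrl_step (X t) (b t)) by reflexivity.
  assert (Xbox : forall t, in_box n (X t)) by (intros [|t]; [exact Hx0|apply step_in_box]).
  assert (Xave : forall t, 0 <= x_ave n (X t) <= 1) by (intros; apply x_ave_bounds; [lia|apply Xbox]).
  destruct (contraction_reaches_level (fun t => max_diff n (X t)) (1 - wm) (2 * d) rho K)
    as [t0 [Ht0 Hc0]]; try lra.
  - apply max_diff_box, Xbox.
  - replace (1 - (1 - wm)) with wm by ring.
    apply Rmult_le_reg_r with wm; [lra|]. unfold Rdiv. rewrite Rmult_assoc, Rinv_l by lra. lra.
  - intros t Ht Hc. rewrite XS. apply ctrl_step_spread; auto. apply Hb. lia.
  - destruct (steered_into_band (fun k => max_diff n (X (t0 + k)%nat) <= rho)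
      (fun k => x_ave n (X (t0 + k)%nat)) (c - P) (1 + Q - c) d M) as [k [Hk [Hc Hin]]];
      auto; try lra.
    + rewrite Nat.add_0_r. exact Hc0.
    + intros k Hk Hc Hl. rewrite Nat.add_succ_r, XS. apply ctrl_step_up; auto. apply Hb. lia.
    + intros k Hk Hc Hh. rewrite Nat.add_succ_r, XS. apply ctrl_step_down; auto. apply Hb. lia.
    + exists (S (t0 + k)). split; [lia|]. rewrite XS. apply ctrl_step_split; auto. apply Hb. lia.
Qed.

Lemma ctrl_robustly_reachable : robustly_reachable n r w eta (E_set n c).
Proof.
  destruct (pow_lt_1_zero (1 - wm) ltac:(rewrite Rabs_right; lra) (rho / 2) ltac:(lra)) as [K HK].
  specialize (HK K (le_n K)). rewrite Rabs_right in HK by (apply Rle_ge, pow_le; lra).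
  destruct (INR_archimed d 1 ltac:(lra)) as [M HM].
  exists (K + M + 1)%nat, d. split; [lia|]. split; [lra|].
  intros x0 Hx0. right. exists (fun _ _ => d), (fun h _ i => ctrl (cur h) i).
  split; [intros; lra|]. split; [intros h i j Hi _; pose proof (ctrl_bounded (cur h) i Hi); lra|].
  intros b Hb. apply ctrl_reaches; auto.
  intros t Ht i j Hi Hj Hji Hnb. exact (Hb t i j Ht Hi Hj Hji Hnb).
Qed.

End Steering.

Theorem lemma8 (n : nat) (r w : nat -> R) (eta eps : R) :
  (3 <= n)%nat ->
  (forall i, (i < n)%nat -> 0 < r i <= 1) ->
  (forall i, (i < n)%nat -> 0 < w i < 1) ->
  0 < eta ->
  0 < eps < eta ->
  robustly_reachable n r w eta (E_set n (c_eps n w eta eps)).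
Proof.
  intros Hn Hr Hw Heta Heps.
  set (rho := min_over n r). set (wm := min_over n w). set (gm := min_over n (gain n w)).
  assert (Hrho : 0 < rho) by (apply min_over_pos; intros; apply Hr; auto).
  assert (Hwm : 0 < wm) by (apply min_over_pos; intros; apply Hw; auto).
  assert (Hgm : 0 < gm) by (apply min_over_pos; intros; apply gain_bounds; auto; lia).
  set (d := Rmin (eps / 4) (Rmin (gm * eta / 6) (wm * rho / 4))).
  assert (Hd_eps : d <= eps / 4) by apply Rmin_l.
  assert (Hd_gm : d <= gm * eta / 6) by (eapply Rle_trans; [apply Rmin_r|apply Rmin_l]).
  assert (Hd_wm : d <= wm * rho / 4) by (eapply Rle_trans; [apply Rmin_r|apply Rmin_r]).
  assert (Hd : 0 < d) by (repeat apply Rmin_glb_lt; nra).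
  destruct (max_a_attained n w eta) as [i0 [j0 [Hi0 [Hj0 [Hij Hmax]]]]]; auto; [lia|].
  apply (ctrl_robustly_reachable n r w eta _ d rho wm gm i0 j0); auto; try lia; try lra.
  - intros i Hi. split; [apply min_over_le|apply Hw]; auto.
  - intros i Hi. apply min_over_le; auto.
  - intros i Hi. apply min_over_le; auto.
  - apply Rmin_r.
  - assert (c_eps n w eta eps <= max_a n w eta - 2 * eps) by apply Rmin_l. lra.
Qed.
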